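(* Let $\mathcal V=\{1,\dots,V\}$ be a vocabulary, $L\ge 1$, and let $P$ be a probability distribution on $\mathcal V^L$. Let $Q_\theta$ be an autoregressive model on $\mathcal V^L$ given by a logit map $F_\theta$, i.e. $Q_\theta(x_l\mid \mathbf x_{<l})=\mathrm{softmax}(F_\theta(\mathbf x_{<l}))_{x_l}$, and for a temperature $t>0$ let $Q^t_\theta(\mathbf x)=\prod_{l=1}^L \mathrm{softmax}(F_\theta(\mathbf x_{<l})/t)_{x_l}$. Let $$Z=\max_{\mathbf x\in\mathcal V^L}\ \max_{l\in\{1,\dots,L\}}\ \max_{i,j\in\mathcal V}\big(F_\theta(\mathbf x_{<l})_i-F_\theta(\mathbf x_{<l})_j\big).$$ Then for every temperature $t>0$ and every $\lambda\in(0,\infty)$, $$\alpha_\lambda(P\Vert Q^t_\theta)\le \frac{|\mathrm{Supp}(P)|}{V^L}e^{ZL/t}\quad\text{and}\quad \beta_\lambda(P\Vert Q^t_\theta)\le \frac1\lambda\,\frac{|\mathrm{Supp}(P)|}{V^L}e^{ZL/t}.$$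
   Context: For distributions $P,Q$ on a finite set $\mathcal X$ and $\lambda\in(0,\infty)$, the PR-curve quantities are $\alpha_\lambda(P\Vert Q)=\sum_{\mathbf x\in\mathcal X}\min(\lambda P(\mathbf x),Q(\mathbf x))$ (Precision at trade-off $\lambda$) and $\beta_\lambda(P\Vert Q)=\sum_{\mathbf x\in\mathcal X}\min(P(\mathbf x),Q(\mathbf x)/\lambda)$ (Recall at trade-off $\lambda$). $\mathrm{Supp}(P)$ is the set of sequences with positive $P$-probability, $\mathbf x_{<l}=(x_1,\dots,x_{l-1})$ (empty for $l=1$), and $F_\theta(\mathbf x_{<l})\in\mathbb R^V$ is the logit vector with entries $F_\theta(\mathbf x_{<l})_i$. *)

From HB Require Import structures.
From mathcomp Require Import all_boot all_order all_algebra.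
From mathcomp Require Import all_classical all_reals all_analysis.
Set Implicit Arguments. Unset Strict Implicit. Unset Printing Implicit Defensive.
Import Order.TTheory GRing.Theory Num.Theory.
Local Open Scope ring_scope.

(* Vocabulary {1..V} is modelled as 'I_V; sequences in V^L as L.-tuple 'I_V.
   Positions l = 1..L are 0-indexed as l : 'I_L; the prefix x_{<l} is
   take l x (empty for the first position). *)

Definition softmax (R : realType) (V : nat) (v : 'I_V -> R) (i : 'I_V) : R :=
  expR (v i) / \sum_(j < V) expR (v j).

Definition Qtemp (R : realType) (V L : nat) (F : seq 'I_V -> 'I_V -> R) (t : R)
  (x : L.-tuple 'I_V) : R :=
  \prod_(l < L) softmax (fun i => F (take l x) i / t) (tnth x l).

Definition PR_alpha (R : realType) (T : finType) (lam : R) (P Q : T -> R) : R :=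
  \sum_(x : T) Num.min (lam * P x) (Q x).
Definition PR_beta (R : realType) (T : finType) (lam : R) (P Q : T -> R) : R :=
  \sum_(x : T) Num.min (P x) (Q x / lam).

Definition supp (R : realType) (T : finType) (P : T -> R) : {set T} :=
  [set x | 0 < P x].

(* Z = max_x max_l max_{i,j} (F(x_{<l})_i - F(x_{<l})_j).  The big max is
   started at 0, which is harmless: the terms with i = j equal 0, so the
   maximum is always >= 0 (for L, V >= 1). *)
Definition Zmax (R : realType) (V L : nat) (F : seq 'I_V -> 'I_V -> R) : R :=
  \big[Num.max/0]_(x : L.-tuple 'I_V) \big[Num.max/0]_(l < L)
    \big[Num.max/0]_(i < V) \big[Num.max/0]_(j < V)
      (F (take l x) i - F (take l x) j).

(** The logits at each position differ by at most [Z], so every tempered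
   softmax probability is at most [e^(Z/t) / V], and the model gives every
   sequence probability at most [e^(Z L / t) / V^L]. Off the support of [P]
   the summands [min (lam P x) (Q x)] and [min (P x) (Q x / lam)] are
   nonpositive, and on it they are at most [Q x] and [Q x / lam], so each PR
   quantity is at most [|Supp P|] times the uniform bound on [Q]. *)
From HB Require Import structures.
From mathcomp Require Import all_boot all_order all_algebra.
From mathcomp Require Import all_classical all_reals all_analysis.
Import Order.TTheory GRing.Theory Num.Theory.
Local Open Scope ring_scope.

Section Softmax.
Context {R : realType} {V : nat}.
Implicit Types (v : 'I_V -> R) (i : 'I_V).

Lemma softmax_ge0 v i : 0 <= softmax v i.
Proof. by rewrite divr_ge0 ?expR_ge0 ?sumr_ge0. Qed.

Lemma softmax_le_spread v i (Z : R) :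
  (forall j, v i - v j <= Z) -> softmax v i <= expR Z / V%:R.
Proof.
move=> spread.
have V_gt0 : (0 < V%:R :> R) by rewrite ltr0n (leq_ltn_trans _ (ltn_ord i)).
have sum_gt0 : 0 < \sum_(j < V) expR (v j).
  by rewrite (bigD1 i) //= ltr_pwDl ?expR_gt0 ?sumr_ge0.
rewrite /softmax ler_pdivrMr // mulrAC ler_pdivlMr // mulr_sumr.
have -> : expR (v i) * V%:R = \sum_(j < V) expR (v i).
  by rewrite sumr_const card_ord mulr_natr.
apply: ler_sum => j _.
by rewrite -expRD ler_expR -lerBlDr.
Qed.

Lemma softmax_temp_le_spread v i (t Z : R) : 0 < t ->
  (forall j, v i - v j <= Z) ->
  softmax (fun k => v k / t) i <= expR (Z / t) / V%:R.
Proof.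
move=> t_gt0 spread; apply: softmax_le_spread => j.
by rewrite -mulrBl ler_pM2r ?invr_gt0.
Qed.

End Softmax.

Section AutoregressiveModel.
Context {R : realType} {V L : nat}.
Variable F : seq 'I_V -> 'I_V -> R.

Lemma Zmax_ge (x : L.-tuple 'I_V) (l : 'I_L) (i j : 'I_V) :
  F (take l x) i - F (take l x) j <= Zmax L F.
Proof.
apply: le_trans (le_bigmax _ _ x); apply: le_trans (le_bigmax _ _ l).
by apply: le_trans (le_bigmax _ _ i); apply: le_bigmax.
Qed.

Lemma Qtemp_le (t : R) (x : L.-tuple 'I_V) : 0 < t ->
  Qtemp F t x <= expR (Zmax L F * L%:R / t) / (V ^ L)%:R.
Proof.
move=> t_gt0.
apply: (@le_trans _ _ (\prod_(l < L) (expR (Zmax L F / t) / V%:R))).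
  apply: ler_prod => l _; rewrite softmax_ge0 /=.
  by apply: softmax_temp_le_spread => // j; apply: Zmax_ge.
by rewrite prodr_const card_ord expr_div_n natrX -expRM_natr mulrAC.
Qed.

End AutoregressiveModel.

Section PRCurve.
Context {R : realType} {T : finType}.
Variables (lam : R) (P Q : T -> R).

Lemma PR_alpha_le_sum_supp : 0 <= lam ->
  PR_alpha lam P Q <= \sum_(x in supp P) Q x.
Proof.
move=> lam_ge0; rewrite /PR_alpha [leRHS]big_mkcond; apply: ler_sum => x _.
rewrite inE; case: ltP => [_ | P_le0]; first by rewrite ge_min lexx orbT.
by rewrite ge_min mulr_ge0_le0.
Qed.

Lemma PR_beta_le_sum_supp : PR_beta lam P Q <= \sum_(x in supp P) Q x / lam.
Proof.
rewrite /PR_beta [leRHS]big_mkcond; apply: ler_sum => x _.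
by rewrite inE; case: ltP => [_ | P_le0]; rewrite ge_min ?lexx ?orbT ?P_le0.
Qed.

Lemma sum_supp_le_card (B : R) (G : T -> R) : (forall x, G x <= B) ->
  \sum_(x in supp P) G x <= #|supp P|%:R * B.
Proof. by move=> G_le; rewrite mulr_natl -sumr_const ler_sum. Qed.

End PRCurve.

Theorem theorem4p2 (R : realType) (V L : nat) (hV : (0 < V)%N) (hL : (0 < L)%N)
  (P : L.-tuple 'I_V -> R)
  (P_ge0 : forall x, 0 <= P x) (P_sum1 : \sum_(x : L.-tuple 'I_V) P x = 1)
  (F : seq 'I_V -> 'I_V -> R) (t lam : R) (ht : 0 < t) (hlam : 0 < lam) :
  PR_alpha lam P (Qtemp F t)
    <= #|supp P|%:R / (V ^ L)%:R * expR (Zmax L F * L%:R / t)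
  /\ PR_beta lam P (Qtemp F t)
    <= lam^-1 * (#|supp P|%:R / (V ^ L)%:R) * expR (Zmax L F * L%:R / t).
Proof.
set E := expR _; set n := #|supp P|%:R.
have Q_le (x : L.-tuple 'I_V) : Qtemp F t x <= E / (V ^ L)%:R := Qtemp_le F t x ht.
have Q_div_le (x : L.-tuple 'I_V) : Qtemp F t x / lam <= lam^-1 * (E / (V ^ L)%:R).
  by rewrite mulrC ler_pM2l ?invr_gt0.
have card_bound : n * (E / (V ^ L)%:R) = n / (V ^ L)%:R * E by rewrite mulrA mulrAC.
split.
  apply: le_trans (PR_alpha_le_sum_supp lam P _ (ltW hlam)) _.
  by apply: le_trans (sum_supp_le_card P _ _ Q_le) _; rewrite card_bound.
apply: le_trans (PR_beta_le_sum_supp lam P _) _.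
apply: le_trans (sum_supp_le_card P _ _ Q_div_le) _.
by rewrite -/n mulrCA card_bound -[leRHS]mulrA.
Qed.
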